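(* Let $N\le D_d$. For $t_1,\dots,t_N\in[0,1]$ consider the depolarizing channels $\Phi_{t_i}=t_i\,\mathrm{id}+(1-t_i)\Delta$ on $\mathcal L(\mathbb C^d)$. If $t_1^2+\cdots+t_N^2>1$, then the channels $\Phi_{t_1},\dots,\Phi_{t_N}$ are incompatible.
   Context: $\mathrm{id}(X)=X$ and $\Delta(X)=(\operatorname{Tr}X)I/d$. $D_d$ denotes the maximal cardinality of a set of mutually unbiased orthonormal bases of $\mathbb C^d$ (bases $\mathbf e,\mathbf f$ are unbiased if $|\langle e_i,f_j\rangle|=1/\sqrt d$ for all $i,j$). Channels $\Phi_1,\dots,\Phi_N$ on $\mathcal L(\mathbb C^d)$ are compatible if there is a completely positive trace-preserving $\Lambda:\mathcal L(\mathbb C^d)\to\mathcal L((\mathbb C^d)^{\otimes N})$ whose $i$-th marginal (partial trace over all other factors) is $\Phi_i$ for each $i$; otherwise incompatible. *)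

From mathcomp Require Import all_boot all_order all_algebra.
From mathcomp.real_closed Require Import complex.
Set Implicit Arguments. Unset Strict Implicit. Unset Printing Implicit Defensive.
Import Order.TTheory GRing.Theory Num.Theory.
Local Open Scope ring_scope.
Local Open Scope complex_scope.

Definition op (R : rcfType) (I : finType) := I -> I -> R[i].

Definition optrace (R : rcfType) (I : finType) (X : op R I) : R[i] :=
  \sum_(i : I) X i i.

(* positive semidefinite: <x, X x> >= 0 for all x (in the partial order of C) *)
Definition psd (R : rcfType) (I : finType) (X : op R I) : Prop :=
  forall x : I -> R[i], 0 <= \sum_(i : I) \sum_(j : I) (x i)^* * X i j * x j.

Definition linear_map (R : rcfType) (I J : finType) (L : op R I -> op R J) : Prop :=
  (forall X Y, L (fun i j => X i j + Y i j) = fun a b => L X a b + L Y a b) /\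
  (forall (c : R[i]) X, L (fun i j => c * X i j) = fun a b => c * L X a b).

(* id_k (x) L, acting blockwise on operators on C^k (x) C^I *)
Definition ampl (R : rcfType) (I J : finType) (k : nat) (L : op R I -> op R J)
  : op R ('I_k * I)%type -> op R ('I_k * J)%type :=
  fun X p q => L (fun i i' => X (p.1, i) (q.1, i')) p.2 q.2.

Definition completely_positive (R : rcfType) (I J : finType) (L : op R I -> op R J) : Prop :=
  forall (k : nat) (X : op R ('I_k * I)%type), psd X -> psd (ampl L X).

Definition trace_preserving (R : rcfType) (I J : finType) (L : op R I -> op R J) : Prop :=
  forall X, optrace (L X) = optrace X.

Definition channel (R : rcfType) (I J : finType) (L : op R I -> op R J) : Prop :=
  [/\ linear_map L, completely_positive L & trace_preserving L].

(* index set of (C^d)^{(x) N} *)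
Definition tens_index (d N : nat) : finType := {ffun 'I_N -> 'I_d}.

(* partial trace over all tensor factors except the i-th *)
Definition marginal (R : rcfType) (d N : nat) (i : 'I_N)
  (Y : op R (tens_index d N)) : op R 'I_d :=
  fun a b => \sum_(f : tens_index d N | f i == a)
               Y f (finfun (fun j : 'I_N => if j == i then b else f j)).

Definition compatible (R : rcfType) (d N : nat) (Phi : 'I_N -> op R 'I_d -> op R 'I_d)
  : Prop :=
  exists Lam : op R 'I_d -> op R (tens_index d N),
    channel Lam /\ forall (i : 'I_N) (X : op R 'I_d), marginal i (Lam X) = Phi i X.

Definition depolarizing (R : rcfType) (d : nat) (t : R) (X : op R 'I_d) : op R 'I_d :=
  fun a b => t%:C * X a b
             + (1 - t)%:C * (optrace X * (if a == b then 1 else 0) / d%:R).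

Definition inner (R : rcfType) (d : nat) (u v : 'I_d -> R[i]) : R[i] :=
  \sum_(k < d) (u k)^* * v k.

Definition orthonormal_basis (R : rcfType) (d : nat) (e : 'I_d -> 'I_d -> R[i]) : Prop :=
  forall i j : 'I_d, inner (e i) (e j) = (if i == j then 1 else 0).

Definition unbiased (R : rcfType) (d : nat) (e f : 'I_d -> 'I_d -> R[i]) : Prop :=
  forall i j : 'I_d, `|inner (e i) (f j)| = ((Num.sqrt (d%:R : R))^-1)%:C.

(* "N <= D_d": there are N mutually unbiased orthonormal bases of C^d *)
Definition has_N_MUBs (R : rcfType) (d N : nat) : Prop :=
  exists B : 'I_N -> 'I_d -> 'I_d -> R[i],
    (forall n, orthonormal_basis (B n)) /\
    (forall n m, n != m -> unbiased (B n) (B m)).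

From mathcomp Require Import all_boot all_order all_algebra.
From mathcomp.real_closed Require Import complex.
From mathcomp Require Import ring.
From Stdlib Require Import FunctionalExtensionality.
Import Order.TTheory GRing.Theory Num.Theory.
Set Implicit Arguments. Unset Strict Implicit. Unset Printing Implicit Defensive.
Local Open Scope ring_scope.

(* Suppose a channel Lam has the depolarizing channels Phi_(t_i) as marginals.
   Pick one vector v_i from each of the N mutually unbiased bases and put
   Q_i = |v_i><v_i| - I/d. These traceless operators are orthogonal for the
   Hilbert-Schmidt inner product, with squared norm 1 - 1/d, so expanding
   ||<x,x> sum_i t_i Q_i - (|x><x| - <x,x> I/d)||^2 >= 0 shows that
   W = c I - sum_i t_i Q_i is positive semidefinite for
   c = (1 - 1/d) (1 + sum_i t_i^2) / 2.  By complete positivity,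
   <w, Lam(W) w> >= 0 for the product vector w = v_1 (x) ... (x) v_N.
   Sum over all d^N such choices: the product vectors form an orthonormal basis,
   so the first term gives c Tr Lam(I) = c d, while the i-th marginal condition
   turns the i-th term into (d - 1) t_i.  Hence 0 <= (d - 1) (1 - sum_i t_i^2) / 2. *)

Section DepolarizingIncompatibility.
Variable R : rcfType.
Local Notation C := R[i].

Lemma op_ext (I : finType) (X Y : op R I) : (forall a b, X a b = Y a b) -> X = Y.
Proof.
by move=> XY; apply: functional_extensionality => a; apply: functional_extensionality.
Qed.

Definition qform (I : finType) (X : op R I) (x : I -> C) : C :=
  \sum_i \sum_j (x i)^* * X i j * x j.

Definition idop {I : finType} : op R I := fun a b => if a == b then 1 else 0.

Definition proj_shift (I : finType) (u : I -> C) (s : C) : op R I :=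
  fun a b => u a * (u b)^* - s * idop a b.

Definition opcomb (I K : finType) (e : K -> C) (F : K -> op R I) : op R I :=
  fun a b => \sum_k e k * F k a b.

Definition hsdot (I : finType) (X Y : op R I) : C :=
  \sum_a \sum_b (X a b)^* * Y a b.

Lemma conj_idop (I : finType) (a b : I) : (idop a b)^* = idop a b.
Proof. by rewrite /idop; case: (a == b); rewrite ?conjC1 ?conjC0. Qed.

Lemma sum_idopl (I : finType) (a : I) (F : I -> C) : \sum_b idop a b * F b = F a.
Proof.
rewrite (bigD1 a) //= /idop eqxx mul1r big1 ?addr0 // => b /negbTE.
by rewrite eq_sym => ->; rewrite mul0r.
Qed.

Lemma sum_pair_ord1 (I : finType) (F : 'I_1 * I -> C) :
  \sum_p F p = \sum_i F (ord0, i).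
Proof.
rewrite (eq_bigr (fun p => F (p.1, p.2))); last by case.
by rewrite -(pair_bigA _ (fun o i => F (o, i))) /= big_ord1.
Qed.

Lemma psd_cp (I J : finType) (L : op R I -> op R J) (X : op R I) :
  completely_positive L -> psd X -> psd (L X).
Proof.
move=> cpL psdX x.
have psdX1 : psd (fun p q : 'I_1 * I => X p.2 q.2).
  move=> y; have := psdX (fun i => y (ord0, i)); congr (_ <= _).
  by rewrite sum_pair_ord1; apply: eq_bigr => i _; rewrite sum_pair_ord1.
have := cpL 1%N _ psdX1 (fun p => x p.2); congr (_ <= _).
by rewrite sum_pair_ord1; apply: eq_bigr => i _; rewrite sum_pair_ord1.
Qed.

Lemma sum3_exchange (I J K : finType) (F : I -> J -> K -> C) :
  \sum_a \sum_b \sum_k F a b k = \sum_k \sum_a \sum_b F a b k.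
Proof.
by rewrite [RHS]exchange_big; apply: eq_bigr => a _; rewrite exchange_big.
Qed.

Lemma qform_opcomb (I K : finType) (e : K -> C) (F : K -> op R I) x :
  qform (opcomb e F) x = \sum_k e k * qform (F k) x.
Proof.
rewrite /qform /opcomb.
transitivity (\sum_a \sum_b \sum_k e k * ((x a)^* * F k a b * x b)).
  apply: eq_bigr => a _; apply: eq_bigr => b _.
  by rewrite mulr_sumr mulr_suml; apply: eq_bigr => k _; ring.
rewrite sum3_exchange; apply: eq_bigr => k _.
by rewrite mulr_sumr; apply: eq_bigr => a _; rewrite mulr_sumr.
Qed.

Lemma qform_scale_sub (I : finType) (c : C) (X Y : op R I) x :
  qform (fun a b => c * X a b - Y a b) x = c * qform X x - qform Y x.
Proof.
rewrite /qform mulr_sumr -sumrB; apply: eq_bigr => a _.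
by rewrite mulr_sumr -sumrB; apply: eq_bigr => b _; ring.
Qed.

Lemma linear_map0 (I J : finType) (L : op R I -> op R J) :
  linear_map L -> L (fun _ _ => 0) = (fun _ _ => 0).
Proof.
case=> _ LZ; have := LZ 0 (fun _ _ => 0).
have -> : (fun a b : I => 0 * 0) = (fun _ _ => 0 : C) by apply: op_ext => a b; rewrite mul0r.
by move=> ->; apply: op_ext => a b; rewrite mul0r.
Qed.

Lemma linear_map_scale_sub (I J : finType) (L : op R I -> op R J) (c : C) (X Y : op R I) :
  linear_map L -> L (fun a b => c * X a b - Y a b) = (fun a b => c * L X a b - L Y a b).
Proof.
case=> LD LZ.
have -> : (fun a b => c * X a b - Y a b)
    = (fun a b => (fun a b => c * X a b) a b + (fun a b => -1 * Y a b) a b).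
  by apply: op_ext => a b; rewrite mulN1r.
by rewrite LD !LZ; apply: op_ext => a b; rewrite mulN1r.
Qed.

Lemma linear_map_opcomb (I J K : finType) (L : op R I -> op R J)
    (e : K -> C) (F : K -> op R I) :
  linear_map L -> L (opcomb e F) = opcomb e (fun k => L (F k)).
Proof.
move=> linL; have [LD LZ] := linL; rewrite /opcomb.
elim: (index_enum K) => [|k r IH].
  rewrite (_ : (fun a b => \sum_(k <- [::]) e k * F k a b) = fun _ _ => 0).
    by rewrite linear_map0 //; apply: op_ext => a b; rewrite big_nil.
  by apply: op_ext => a b; rewrite big_nil.
rewrite (_ : (fun a b => \sum_(l <- k :: r) e l * F l a b) = fun a b =>
    (fun a b => e k * F k a b) a b + (fun a b => \sum_(l <- r) e l * F l a b) a b).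
  by rewrite LD LZ IH; apply: op_ext => a b; rewrite big_cons.
by apply: op_ext => a b; rewrite big_cons.
Qed.

Lemma hsdot_self_ge0 (I : finType) (X : op R I) : 0 <= hsdot X X.
Proof. by apply: sumr_ge0 => a _; apply: sumr_ge0 => b _; rewrite mulrC mul_conjC_ge0. Qed.

Lemma hsdot_sub_self (I : finType) (X Y : op R I) :
  hsdot (fun a b => X a b - Y a b) (fun a b => X a b - Y a b)
  = hsdot X X - (hsdot X Y + hsdot Y X) + hsdot Y Y.
Proof.
rewrite /hsdot -!big_split -sumrB -big_split; apply: eq_bigr => a _.
rewrite -!big_split -sumrB -big_split; apply: eq_bigr => b _.
by rewrite /= rmorphB; ring.
Qed.

Lemma hsdot_opcombl (I K : finType) (e : K -> C) (F : K -> op R I) (Y : op R I) :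
  hsdot (opcomb e F) Y = \sum_k (e k)^* * hsdot (F k) Y.
Proof.
rewrite /hsdot /opcomb.
transitivity (\sum_a \sum_b \sum_k (e k)^* * ((F k a b)^* * Y a b)).
  apply: eq_bigr => a _; apply: eq_bigr => b _.
  by rewrite rmorph_sum mulr_suml; apply: eq_bigr => k _; rewrite rmorphM; ring.
rewrite sum3_exchange; apply: eq_bigr => k _.
by rewrite mulr_sumr; apply: eq_bigr => a _; rewrite mulr_sumr.
Qed.

Lemma hsdot_opcombr (I K : finType) (e : K -> C) (F : K -> op R I) (Y : op R I) :
  hsdot Y (opcomb e F) = \sum_k e k * hsdot Y (F k).
Proof.
rewrite /hsdot /opcomb.
transitivity (\sum_a \sum_b \sum_k e k * ((Y a b)^* * F k a b)).
  apply: eq_bigr => a _; apply: eq_bigr => b _.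
  by rewrite mulr_sumr; apply: eq_bigr => k _; ring.
rewrite sum3_exchange; apply: eq_bigr => k _.
by rewrite mulr_sumr; apply: eq_bigr => a _; rewrite mulr_sumr.
Qed.

Lemma conj_inner d (u v : 'I_d -> C) : (inner u v)^* = inner v u.
Proof. by rewrite /inner rmorph_sum; apply: eq_bigr => k _; rewrite rmorphM /= conjCK mulrC. Qed.

Lemma inner_self_ge0 d (x : 'I_d -> C) : 0 <= inner x x.
Proof. by apply: sumr_ge0 => a _; rewrite mulrC mul_conjC_ge0. Qed.

Lemma inner_self_eq0 d (x : 'I_d -> C) : inner x x = 0 -> forall a, x a = 0.
Proof.
move=> x0 a; have x_ge0 (b : 'I_d) : true -> 0 <= (x b)^* * x b.
  by move=> _; rewrite mulrC mul_conjC_ge0.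
have /eqP := psumr_eq0P x_ge0 x0 (i := a) isT.
by rewrite mulf_eq0 conjC_eq0 orbb => /eqP.
Qed.

Lemma qform_proj_shift d (u x : 'I_d -> C) (s : C) :
  qform (proj_shift u s) x = inner x u * inner u x - s * inner x x.
Proof.
rewrite /qform /inner mulr_suml mulr_sumr -sumrB; apply: eq_bigr => a _.
transitivity (\sum_b ((x a)^* * u a * ((u b)^* * x b)) - s * \sum_b idop a b * ((x a)^* * x b)).
  by rewrite mulr_sumr -sumrB; apply: eq_bigr => b _; rewrite /proj_shift; ring.
by rewrite sum_idopl -mulr_sumr.
Qed.

Lemma hsdot_proj_shift d (u v : 'I_d -> C) (s s' : C) :
  hsdot (proj_shift u s) (proj_shift v s')
  = inner u v * inner v u - s' * inner u u - s^* * inner v v + s^* * s' * d%:R.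
Proof.
rewrite /hsdot.
transitivity (\sum_a \sum_b ((u a)^* * v a * (u b * (v b)^*)
   - s' * (idop a b * ((u a)^* * u b)) - s^* * (idop a b * (v a * (v b)^*))
   + s^* * s' * (idop a b * idop a b))).
  apply: eq_bigr => a _; apply: eq_bigr => b _.
  by rewrite /proj_shift rmorphB !rmorphM /= conjCK conj_idop; ring.
rewrite (eq_bigr (fun a => (u a)^* * v a * inner v u - s' * ((u a)^* * u a)
    - s^* * (v a * (v a)^*) + s^* * s')); last first.
  move=> a _; rewrite !big_split /= !sumrN -!mulr_sumr !sum_idopl /idop eqxx mulr1.
  by rewrite /inner; congr (_ * _ - _ - _ + _); apply: eq_bigr => k _; rewrite mulrC.
rewrite !big_split /= !sumrN -!mulr_suml -!mulr_sumr sumr_const card_ord -mulr_natr /inner.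
rewrite [X in _ - s^* * X](eq_bigr (fun i => (v i)^* * v i)); last by move=> i _; rewrite mulrC.
ring.
Qed.

Lemma hsdot_proj_shift_unit d (u v : 'I_d -> C) :
  (0 < d)%N -> inner u u = 1 -> inner v v = 1 ->
  hsdot (proj_shift u d%:R^-1) (proj_shift v d%:R^-1) = inner u v * inner v u - d%:R^-1.
Proof.
move=> d_gt0 u_unit v_unit; rewrite hsdot_proj_shift u_unit v_unit fmorphV /= conjC_nat.
by field; rewrite pnatr_eq0 -lt0n.
Qed.

Lemma hsdot_proj_shift_cross d (u x : 'I_d -> C) :
  (0 < d)%N -> inner u u = 1 ->
  let Qx := proj_shift x (inner x x / d%:R) in
  hsdot (proj_shift u d%:R^-1) Qx + hsdot Qx (proj_shift u d%:R^-1)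
  = 2 * (inner x u * inner u x - d%:R^-1 * inner x x).
Proof.
move=> d_gt0 u_unit Qx; rewrite !hsdot_proj_shift u_unit rmorphM fmorphV /= conjC_nat conj_inner.
by field; rewrite pnatr_eq0 -lt0n.
Qed.

Lemma hsdot_proj_shift_self d (x : 'I_d -> C) :
  (0 < d)%N ->
  let Qx := proj_shift x (inner x x / d%:R) in
  hsdot Qx Qx = inner x x ^+ 2 * (1 - d%:R^-1).
Proof.
move=> d_gt0 Qx; rewrite hsdot_proj_shift rmorphM fmorphV /= conjC_nat conj_inner.
by field; rewrite pnatr_eq0 -lt0n.
Qed.

Lemma qform_idop d (x : 'I_d -> C) : qform (@idop 'I_d) x = inner x x.
Proof.
rewrite /qform /inner; apply: eq_bigr => a _.
by rewrite -(sum_idopl a (fun b => (x a)^* * x b)); apply: eq_bigr => b _; ring.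
Qed.

Definition witness_const d N (t : 'I_N -> C) : C :=
  (1 - d%:R^-1) * (\sum_i t i * t i + 1) / 2.

Definition witness d N (t : 'I_N -> C) (v : 'I_N -> 'I_d -> C) : op R 'I_d :=
  fun a b => witness_const d t * idop a b
             - opcomb t (fun i => proj_shift (v i) d%:R^-1) a b.

Lemma psd_witness d N (t : 'I_N -> C) (v : 'I_N -> 'I_d -> C) :
  (0 < d)%N ->
  (forall i, inner (v i) (v i) = 1) ->
  (forall i j, i != j -> inner (v i) (v j) * inner (v j) (v i) = d%:R^-1) ->
  (forall i, (t i)^* = t i) ->
  psd (witness t v).
Proof.
move=> d_gt0 v_unit v_overlap t_real x; change (0 <= qform (witness t v) x).
set n := inner x x; set c := witness_const d t.
set Q := fun i => proj_shift (v i) d%:R^-1; set Qx := proj_shift x (n / d%:R).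
set y := \sum_i t i * (inner x (v i) * inner (v i) x - d%:R^-1 * n).
have qformE : qform (witness t v) x = c * n - y.
  rewrite qform_scale_sub qform_opcomb qform_idop; congr (_ - _).
  by apply: eq_bigr => i _; rewrite qform_proj_shift.
have [n0|n_neq0] := eqVneq n 0.
  rewrite /qform big1 // => a _; rewrite big1 // => b _.
  by rewrite (inner_self_eq0 n0) conjC0 !mul0r.
have hsQQ k l : hsdot (Q k) (Q l) = if k == l then 1 - d%:R^-1 else 0.
  rewrite hsdot_proj_shift_unit ?v_unit //.
  by case: eqVneq => [->|kl]; rewrite ?v_unit ?mulr1 // v_overlap // subrr.
have hsQQx k := hsdot_proj_shift_cross x d_gt0 (v_unit k).
have n_real : n^* = n by rewrite conj_inner.
have n_gt0 : 0 < n by rewrite lt_def n_neq0 inner_self_ge0.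
set X := opcomb (fun i => n * t i) Q.
have hsXX : hsdot X X = n * n * (1 - d%:R^-1) * \sum_i t i * t i.
  rewrite hsdot_opcombl [RHS]mulr_sumr; apply: eq_bigr => k _.
  rewrite hsdot_opcombr (bigD1 k) //= hsQQ eqxx big1 ?addr0 => [|l /negbTE lk].
    by rewrite rmorphM /= n_real t_real; ring.
  by rewrite hsQQ eq_sym lk mulr0.
have hsXQx : hsdot X Qx + hsdot Qx X = n * (2 * y).
  rewrite hsdot_opcombl hsdot_opcombr -big_split /= /y 2![in RHS]mulr_sumr.
  apply: eq_bigr => k _.
  by rewrite rmorphM /= n_real t_real -mulrDr hsQQx -/n; ring.
have hsE : hsdot (fun a b => X a b - Qx a b) (fun a b => X a b - Qx a b)
           = n * (2 * (c * n - y)).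
  rewrite hsdot_sub_self hsXX hsXQx hsdot_proj_shift_self // -/n /c /witness_const.
  by field; rewrite pnatr_eq0 -lt0n.
rewrite qformE.
by have := hsdot_self_ge0 (fun a b => X a b - Qx a b); rewrite hsE !pmulr_rge0 // ltr0n.
Qed.

Lemma orthonormal_basis_completeness d (e : 'I_d -> 'I_d -> C) :
  orthonormal_basis e -> forall a b, \sum_k (e k a)^* * e k b = idop a b.
Proof.
move=> e_onb a b.
pose U : 'M[C]_d := \matrix_(k, a) e k a.
pose V : 'M[C]_d := \matrix_(a, k) (e k a)^*.
have UV : U *m V = 1%:M.
  apply/matrixP => k l; rewrite !mxE (_ : (k == l)%:R = if l == k then 1 else 0).
    by rewrite -e_onb; apply: eq_bigr => c _; rewrite !mxE mulrC.
  by rewrite eq_sym; case: eqP.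
transitivity ((V *m U) a b); first by rewrite mxE; apply: eq_bigr => k _; rewrite !mxE.
by rewrite mulmx1C // mxE /idop; case: eqP.
Qed.

Lemma sum_qform_complete (I K : finType) (e : K -> I -> C) :
  (forall a b, \sum_k (e k a)^* * e k b = idop a b) ->
  forall X : op R I, \sum_k qform X (e k) = optrace X.
Proof.
move=> e_complete X; rewrite /qform /optrace -sum3_exchange; apply: eq_bigr => a _.
rewrite -[RHS](sum_idopl a (X a)); apply: eq_bigr => b _.
by rewrite -e_complete mulr_suml; apply: eq_bigr => k _; ring.
Qed.

Lemma prod_idop (I J : finType) (f g : {ffun I -> J}) :
  \prod_j idop (f j) (g j) = idop f g.
Proof.
rewrite /idop; case: eqVneq => [->|fg].
  by rewrite big1 // => j _; rewrite eqxx.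
have [j fgj] : exists j, f j != g j.
  apply/existsP; apply: contraNT fg => /existsPn fg.
  by apply/eqP/ffunP => j; apply/eqP/negPn/fg.
by rewrite (bigD1 j) //= (negbTE fgj) mul0r.
Qed.

Definition prodvec d N (B : 'I_N -> 'I_d -> 'I_d -> C) (k f : tens_index d N) : C :=
  \prod_j B j (k j) (f j).

Lemma prodvec_completeness d N (B : 'I_N -> 'I_d -> 'I_d -> C) :
  (forall j, orthonormal_basis (B j)) ->
  forall f g, \sum_k (prodvec B k f)^* * prodvec B k g = idop f g.
Proof.
move=> B_onb f g; rewrite -prod_idop.
rewrite (eq_bigr (fun k : tens_index d N =>
    \prod_j ((B j (k j) (f j))^* * B j (k j) (g j)))); last first.
  by move=> k _; rewrite /prodvec rmorph_prod -big_split.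
rewrite -(bigA_distr_bigA (fun j l => (B j l (f j))^* * B j l (g j))).
by apply: eq_bigr => j _; apply: orthonormal_basis_completeness.
Qed.

Definition upd d N (i : 'I_N) (f : tens_index d N) (b : 'I_d) : tens_index d N :=
  [ffun j => if j == i then b else f j].

Lemma idop_upd d N (i : 'I_N) (f g : tens_index d N) (b : 'I_d) :
  idop (upd i f b) g = (\prod_(j | j != i) idop (f j) (g j)) * idop b (g i).
Proof.
rewrite -prod_idop (bigD1 i) //= mulrC ffunE eqxx; congr (_ * _).
by apply: eq_bigr => j ji; rewrite ffunE (negbTE ji).
Qed.

Lemma sum_upd d N (i : 'I_N) (f : tens_index d N) (F : tens_index d N -> C) :
  \sum_(g : tens_index d N) (\prod_(j | j != i) idop (f j) (g j)) * F g = \sum_b F (upd i f b).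
Proof.
transitivity (\sum_b \sum_g idop (upd i f b) g * F g); last first.
  by apply: eq_bigr => b _; rewrite sum_idopl.
rewrite exchange_big; apply: eq_bigr => g _; rewrite -mulr_suml; congr (_ * _).
rewrite (eq_bigr _ (fun b _ => idop_upd i f g b)) -mulr_sumr -[LHS]mulr1; congr (_ * _).
by rewrite (bigD1 (g i)) //= /idop eqxx big1 ?addr0 // => b /negbTE ->.
Qed.

Lemma sum_fixed_prodvec d N (B : 'I_N -> 'I_d -> 'I_d -> C) :
  (forall j, orthonormal_basis (B j)) ->
  forall (i : 'I_N) (l : 'I_d) (f g : tens_index d N),
  \sum_(k : tens_index d N | k i == l) (prodvec B k f)^* * prodvec B k g
  = (\prod_(j | j != i) idop (f j) (g j)) * ((B i l (f i))^* * B i l (g i)).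
Proof.
move=> B_onb i l f g.
pose Q j := [pred m : 'I_d | (j == i) ==> (m == l)].
transitivity (\sum_(k in family Q) \prod_j ((B j (k j) (f j))^* * B j (k j) (g j))).
  apply: eq_big => [k|k _]; last by rewrite /prodvec rmorph_prod -big_split.
  apply/eqP/familyP => [kil j|Qk]; first by rewrite inE -kil; apply/implyP => /eqP ->.
  by have := Qk i; rewrite inE eqxx => /eqP.
rewrite -(bigA_distr_big_dep Q (fun j m => (B j m (f j))^* * B j m (g j))) (bigD1 i) //= mulrC.
rewrite (eq_bigl (pred1 l)) => [|m]; last by rewrite inE eqxx.
rewrite big_pred1_eq; congr (_ * _); apply: eq_bigr => j ji.
rewrite (eq_bigl predT) => [|m]; last by rewrite inE (negbTE ji).
exact: orthonormal_basis_completeness.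
Qed.

Lemma sum_fixed_qform_prodvec d N (B : 'I_N -> 'I_d -> 'I_d -> C) :
  (forall j, orthonormal_basis (B j)) ->
  forall (i : 'I_N) (l : 'I_d) (Y : op R (tens_index d N)),
  \sum_(k : tens_index d N | k i == l) qform Y (prodvec B k)
  = qform (marginal i Y) (B i l).
Proof.
move=> B_onb i l Y; rewrite /qform.
transitivity (\sum_(f : tens_index d N) \sum_g Y f g *
    \sum_(k : tens_index d N | k i == l) (prodvec B k f)^* * prodvec B k g).
  rewrite exchange_big; apply: eq_bigr => f _; rewrite exchange_big.
  by apply: eq_bigr => g _; rewrite mulr_sumr; apply: eq_bigr => k _; ring.
transitivity (\sum_(f : tens_index d N) \sum_b (B i l (f i))^* * Y f (upd i f b) * B i l b).
  apply: eq_bigr => f _.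
  pose F g := (B i l (f i))^* * Y f g * B i l (g i).
  transitivity (\sum_b F (upd i f b)); last by apply: eq_bigr => b _; rewrite /F ffunE eqxx.
  by rewrite -sum_upd; apply: eq_bigr => g _; rewrite sum_fixed_prodvec // /F; ring.
rewrite /marginal (partition_big (fun f : tens_index d N => f i) predT) //=.
apply: eq_bigr => a _; rewrite exchange_big; apply: eq_bigr => b _.
by rewrite mulr_sumr mulr_suml; apply: eq_bigr => f /eqP <-.
Qed.

Lemma qform_depolarizing d (t : R) (X : op R 'I_d) (u : 'I_d -> C) :
  qform (depolarizing t X) u
  = (t%:C)%C * qform X u + ((1 - t)%:C)%C * (optrace X / d%:R) * inner u u.
Proof.
rewrite -qform_idop /qform !mulr_sumr -big_split; apply: eq_bigr => a _ /=.
rewrite !mulr_sumr -big_split; apply: eq_bigr => b _ /=; rewrite /depolarizing /idop.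
(* The Kronecker delta of [depolarizing] and that of [idop] are convertible but
   elaborated differently, so [ring] would see two distinct atoms. *)
by move: (if a == b then _ else _) => delta; ring.
Qed.

Lemma optrace_proj_shift d (u : 'I_d -> C) :
  (0 < d)%N -> inner u u = 1 -> optrace (proj_shift u d%:R^-1) = 0.
Proof.
move=> d_gt0 u_unit; rewrite /optrace /proj_shift sumrB.
have -> : \sum_a u a * (u a)^* = 1.
  by rewrite -u_unit; apply: eq_bigr => a _; rewrite mulrC.
under eq_bigr do rewrite /idop eqxx mulr1.
by rewrite sumr_const card_ord -[_ *+ d]mulr_natr mulVf ?subrr // pnatr_eq0 -lt0n.
Qed.

Lemma qform_depolarizing_proj_shift d (t : R) (u : 'I_d -> C) :
  (0 < d)%N -> inner u u = 1 ->
  qform (depolarizing t (proj_shift u d%:R^-1)) u = (t%:C)%C * (1 - d%:R^-1).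
Proof.
move=> d_gt0 u_unit.
rewrite qform_depolarizing optrace_proj_shift // qform_proj_shift u_unit.
by rewrite mul0r mulr0 !mulr1 addr0.
Qed.

Lemma optrace_idop (I : finType) : optrace (@idop I) = #|I|%:R.
Proof.
by rewrite /optrace (eq_bigr (fun _ => 1)) => [|a _]; rewrite ?sumr_const // /idop eqxx.
Qed.

Lemma unbiased_overlap d (e f : 'I_d -> 'I_d -> C) : unbiased e f ->
  forall a b, inner (e a) (f b) * inner (f b) (e a) = d%:R^-1.
Proof.
move=> ef a b; rewrite -[inner (f b) _]conj_inner -normCK ef -rmorphXn /=.
by rewrite exprVn sqr_sqrtr ?ler0n // fmorphV /= rmorph_nat.
Qed.

Section JointChannel.
Variables (d N : nat) (B : 'I_N -> 'I_d -> 'I_d -> C) (t : 'I_N -> R).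
Variable Lam : op R 'I_d -> op R (tens_index d N).
Hypothesis d_gt1 : (1 < d)%N.
Hypothesis B_onb : forall i, orthonormal_basis (B i).
Hypothesis B_unbiased : forall i j, i != j -> unbiased (B i) (B j).
Hypothesis Lam_channel : channel Lam.
Hypothesis Lam_marginal : forall i X, marginal i (Lam X) = depolarizing (t i) X.

Let tC i : C := ((t i)%:C)%C.
Let d_gt0 : (0 < d)%N. Proof. exact: ltnW. Qed.

Lemma sum_qform_marginal_proj_shift i :
  \sum_(k : tens_index d N) qform (Lam (proj_shift (B i (k i)) d%:R^-1)) (prodvec B k)
  = (d%:R - 1) * tC i.
Proof.
rewrite (partition_big (fun k : tens_index d N => k i) predT) //=.
rewrite (eq_bigr (fun _ => tC i * (1 - d%:R^-1))) => [|l _].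
  by rewrite sumr_const card_ord -mulr_natr; field; rewrite pnatr_eq0 -lt0n.
rewrite (eq_bigr (fun k => qform (Lam (proj_shift (B i l) d%:R^-1)) (prodvec B k)))
  => [|k /eqP -> //].
by rewrite sum_fixed_qform_prodvec // Lam_marginal qform_depolarizing_proj_shift // B_onb eqxx.
Qed.

Lemma sum_qform_witness :
  \sum_(k : tens_index d N) qform (Lam (witness tC (fun i => B i (k i)))) (prodvec B k)
  = (((d%:R - 1) / 2 * (1 - \sum_i t i ^+ 2))%:C)%C.
Proof.
have [Lam_lin _ Lam_tp] := Lam_channel.
under eq_bigr do rewrite /witness (linear_map_scale_sub _ _ _ Lam_lin) qform_scale_sub
  (linear_map_opcomb _ _ Lam_lin) qform_opcomb.
rewrite sumrB -mulr_sumr sum_qform_complete; last exact: prodvec_completeness.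
rewrite (Lam_tp (@idop 'I_d)) optrace_idop card_ord exchange_big /=.
under eq_bigr do rewrite -mulr_sumr sum_qform_marginal_proj_shift.
have sum_tC2 : \sum_i tC i * tC i = ((\sum_i t i ^+ 2)%:C)%C.
  by rewrite rmorph_sum; apply: eq_bigr => i _; rewrite rmorphXn expr2.
rewrite (eq_bigr (fun i => (d%:R - 1) * (tC i * tC i))) => [|i _]; last by rewrite mulrCA.
rewrite -mulr_sumr /witness_const sum_tC2 rmorphM rmorphB /= rmorph1 fmorph_div /=.
rewrite rmorphB /= rmorph1 !rmorph_nat.
by field; rewrite pnatr_eq0 -lt0n.
Qed.

Lemma sum_sq_le1 : \sum_i t i ^+ 2 <= 1.
Proof.
have [_ Lam_cp _] := Lam_channel.
have tC_real i : (tC i)^* = tC i by exact: conjc_real.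
have psd_witness_k (k : tens_index d N) : psd (witness tC (fun i => B i (k i))).
  apply: psd_witness => // [i|i j ij]; first by rewrite B_onb eqxx.
  exact: unbiased_overlap (B_unbiased ij) _ _.
have : 0 <= \sum_(k : tens_index d N)
              qform (Lam (witness tC (fun i => B i (k i)))) (prodvec B k).
  by apply: sumr_ge0 => k _; apply: psd_cp Lam_cp (psd_witness_k k) (prodvec B k).
by rewrite sum_qform_witness ler0c pmulr_rge0 ?subr_ge0 // divr_gt0 // subr_gt0 ltr1n.
Qed.

End JointChannel.
End DepolarizingIncompatibility.

Theorem proposition7p1 (R : rcfType) (d N : nat) (t : 'I_N -> R) :
  (2 <= d)%N ->
  has_N_MUBs R d N ->
  (forall i, 0 <= t i <= 1) ->
  1 < \sum_(i < N) t i ^+ 2 ->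
  ~ compatible (fun i : 'I_N => @depolarizing R d (t i)).
Proof.
move=> d_gt1 [B [B_onb B_unbiased]] _ sum_gt1 [Lam [Lam_channel Lam_marginal]].
by move: sum_gt1; rewrite ltNge (sum_sq_le1 d_gt1 B_onb B_unbiased Lam_channel Lam_marginal).
Qed.
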